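(* Let $\mathcal{E}=\{e_1,\dots,e_n\}$ be an orthonormal basis for $\mathbb{R}^n$ and let $M$ be a $k$-dimensional $\mathcal{E}$-PR subspace. Then for every nonzero $x\in M$, $|\mathrm{supp}(x)|\ge k$.
   Context: For $x=\sum_{i=1}^n\alpha_ie_i$, $\mathrm{supp}(x)=\{i:\alpha_i\neq0\}$ and $|\cdot|$ denotes cardinality. A subspace $M$ is an $\mathcal{E}$-PR subspace if $\{P_Me_i\}_{i=1}^n$ (with $P_M$ the orthogonal projection onto $M$) spans $M$ and whenever $x,y\in M$ satisfy $|\langle x,P_Me_i\rangle|=|\langle y,P_Me_i\rangle|$ for all $i$, then $x=\pm y$. *)

(* R : realType (the real numbers), vectors in R^n are 'rV[R]_n,
   subspaces are represented by row spaces of matrices (mxalgebra). *)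
From HB Require Import structures.
From mathcomp Require Import all_boot all_order all_algebra.
From mathcomp Require Import reals.
Set Implicit Arguments. Unset Strict Implicit. Unset Printing Implicit Defensive.
Import Order.TTheory GRing.Theory Num.Theory.
Local Open Scope ring_scope.

Definition dotv {R : realType} {n : nat} (u v : 'rV[R]_n) : R :=
  \sum_(j < n) u 0 j * v 0 j.

(* An orthonormal family of n vectors in R^n (hence an orthonormal basis). *)
Definition orthonormal_family {R : realType} {n : nat} (e : 'I_n -> 'rV[R]_n) : Prop :=
  forall i j, dotv (e i) (e j) = (i == j)%:R.

Definition orth_proj {R : realType} {n : nat} (M : 'M[R]_n) : 'M[R]_n :=
  let B := row_base M in (B^T *m invmx (B *m B^T)) *m B.

Definition PM {R : realType} {n : nat} (M : 'M[R]_n) (v : 'rV[R]_n) : 'rV[R]_n :=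
  v *m orth_proj M.

(* Support of x with respect to the orthonormal basis e:
   x = \sum_i alpha_i e_i with alpha_i = <x, e_i>. *)
Definition supp {R : realType} {n : nat} (e : 'I_n -> 'rV[R]_n) (x : 'rV[R]_n)
  : {set 'I_n} := [set i | dotv x (e i) != 0].

Definition PR_subspace {R : realType} {n : nat} (e : 'I_n -> 'rV[R]_n)
  (M : 'M[R]_n) : Prop :=
  (\matrix_(i < n, j < n) (PM M (e i)) 0 j == M)%MS /\
  (forall x y : 'rV[R]_n, (x <= M)%MS -> (y <= M)%MS ->
     (forall i, `|dotv x (PM M (e i))| = `|dotv y (PM M (e i))|) ->
     x = y \/ x = - y).

(* If x in M had fewer than k = dim M nonzero coordinates, the vectors of M
   orthogonal to the e_j with j in supp(x) would form a nonzero subspace; pick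
   w != 0 in it.  Then x and w have disjoint supports, so x + w and x - w have
   coordinates of equal absolute value, and since P_M fixes M and is
   self-adjoint, <x +- w, P_M e_i> = <x +- w, e_i>.  Phase retrievability then
   forces x + w = +-(x - w), i.e. w = 0 or x = 0. *)
From HB Require Import structures.
From mathcomp Require Import all_boot all_order all_algebra.
From mathcomp Require Import reals.
Import Order.TTheory GRing.Theory Num.Theory.
Local Open Scope ring_scope.

Lemma dotvE (R : realType) n (u v : 'rV[R]_n) : dotv u v = (u *m v^T) 0 0.
Proof. by rewrite /dotv mxE; apply: eq_bigr => j _; rewrite mxE. Qed.

Lemma dotvDl (R : realType) n (u v w : 'rV[R]_n) :
  dotv (u + v) w = dotv u w + dotv v w.
Proof. by rewrite !dotvE mulmxDl mxE. Qed.

Lemma dotvNl (R : realType) n (u w : 'rV[R]_n) : dotv (- u) w = - dotv u w.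
Proof. by rewrite !dotvE mulNmx mxE. Qed.

Lemma mulmx_tr_eq0 (R : realDomainType) n (u : 'rV[R]_n) :
  u *m u^T = 0 -> u = 0.
Proof.
move=> /(congr1 (fun A : 'M_1 => A 0 0)); rewrite !mxE => sum_sq0.
have sq_ge0 (j : 'I_n) : true -> 0 <= u 0 j * u^T j 0.
  by move=> _; rewrite mxE -expr2 sqr_ge0.
apply/rowP => j; have := @psumr_eq0P _ _ _ _ sq_ge0 sum_sq0 j isT.
by rewrite !mxE => /eqP; rewrite mulf_eq0 orbb => /eqP.
Qed.

Lemma row_free_mulmx_tr_unit {R : realFieldType} {m n} {B : 'M[R]_(m, n)} :
  row_free B -> B *m B^T \in unitmx.
Proof.
move=> freeB; rewrite -row_free_unit -kermx_eq0.
apply/rowV0P => v /sub_kermxP vBBt0.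
have vB0 : v *m B = 0.
  by apply: mulmx_tr_eq0; rewrite trmx_mul mulmxA -(mulmxA v) vBBt0 mul0mx.
by apply: (row_free_inj freeB); rewrite /= vB0 mul0mx.
Qed.

Lemma trmx_orth_proj (R : realType) n (M : 'M[R]_n) :
  (orth_proj M)^T = orth_proj M.
Proof.
rewrite /orth_proj /=; move: (row_base M) => B.
by rewrite !trmx_mul trmx_inv trmx_mul trmxK mulmxA.
Qed.

Lemma orth_proj_id (R : realType) n (M : 'M[R]_n) (y : 'rV[R]_n) :
  (y <= M)%MS -> y *m orth_proj M = y.
Proof.
rewrite -(eq_row_base M) /orth_proj.
have := row_free_mulmx_tr_unit (row_base_free M).
move: (row_base M) => B BBt_unit /mulmxKpV <-; move: (y *m pinvmx B) => c.
by rewrite !mulmxA -(mulmxA c) -(mulmxA c) mulmxV // mulmx1.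
Qed.

Lemma dotv_PM (R : realType) n (M : 'M[R]_n) (y v : 'rV[R]_n) :
  (y <= M)%MS -> dotv y (PM M v) = dotv y v.
Proof.
by move=> yM; rewrite !dotvE /PM trmx_mul trmx_orth_proj mulmxA orth_proj_id.
Qed.

Lemma nonzero_submx_in_ker {F : fieldType} {m n p} {M : 'M[F]_(m, n)}
  (A : 'M[F]_(n, p)) :
  (p < \rank M)%N ->
  exists w : 'rV[F]_n, [/\ (w <= M)%MS, w != 0 & w *m A = 0].
Proof.
move=> lt_p_rM; pose B := row_base M.
have : kermx (B *m A) != 0.
  rewrite -mxrank_eq0 mxrank_ker subn_eq0 -ltnNge.
  exact: leq_ltn_trans (mxrankM_maxr _ _) (leq_ltn_trans (rank_leq_col A) _).
case/rowV0Pn => c /sub_kermxP cBA0 c_neq0; exists (c *m B); split.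
- by apply: submx_trans (submxMl c B) _; rewrite eq_row_base.
- apply: contraNneq c_neq0 => cB0; apply/eqP.
  by apply: (row_free_inj (row_base_free M)); rewrite /= cB0 mul0mx.
- by rewrite -mulmxA.
Qed.

Lemma nonzero_submx_orthogonal {R : realType} {n} {M : 'M[R]_n} {I : finType}
  (f : I -> 'rV[R]_n) {S : {set I}} :
  (#|S| < \rank M)%N ->
  exists w : 'rV[R]_n,
    [/\ (w <= M)%MS, w != 0 & {in S, forall j, dotv w (f j) = 0}].
Proof.
move=> small_S; pose A := \matrix_(l < n, i < #|S|) f (enum_val i) 0 l.
have [w [wM w_neq0 wA0]] := nonzero_submx_in_ker A small_S.
exists w; split=> // j j_S.
have := congr1 (fun v : 'rV_#|S| => v 0 (enum_rank_in j_S j)) wA0.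
rewrite !mxE; under eq_bigr do rewrite mxE.
by rewrite enum_rankK_in.
Qed.

Lemma eqNv (R : numFieldType) (V : lmodType R) (v : V) : (- v == v) = (v == 0).
Proof.
apply/eqP/eqP => [Nv_v | ->]; last exact: oppr0.
have : 2%:R *: v == 0 by rewrite scaler_nat mulr2n -{1}Nv_v addNr.
by rewrite scaler_eq0 pnatr_eq0 => /eqP.
Qed.

Lemma PR_subspace_disjoint_supp {R : realType} {n} {e : 'I_n -> 'rV[R]_n}
  {M : 'M[R]_n} {x w : 'rV[R]_n} :
  PR_subspace e M -> (x <= M)%MS -> (w <= M)%MS ->
  [disjoint supp e x & supp e w] -> x = 0 \/ w = 0.
Proof.
move=> [_ PR] xM wM disj_xw.
have xDw_M := addmx_sub xM wM.
have xBw_M : ((x - w)%R <= M)%MS by apply: addmx_sub; rewrite ?eqmx_opp.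
have [i||] := PR _ _ xDw_M xBw_M.
- rewrite !dotv_PM // !dotvDl dotvNl.
  have [x_i | ] := boolP (i \in supp e x).
    have := disjointFr disj_xw x_i.
    by rewrite inE => /negbFE/eqP->; rewrite oppr0.
  by rewrite inE negbK => /eqP->; rewrite !add0r normrN.
- by move=> /addrI/eqP; rewrite eq_sym eqNv => /eqP; right.
- by rewrite opprB [LHS]addrC => /addrI/eqP; rewrite eq_sym eqNv => /eqP; left.
Qed.

Theorem proposition4p1 (R : realType) (n k : nat) (e : 'I_n -> 'rV[R]_n)
  (M : 'M[R]_n) :
  orthonormal_family e -> \rank M = k -> PR_subspace e M ->
  forall x : 'rV[R]_n, (x <= M)%MS -> x != 0 -> (k <= #|supp e x|)%N.
Proof.
move=> _ <- PR_M x xM x_neq0; rewrite leqNgt; apply/negP => small_supp.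
have [w [wM w_neq0 w_perp]] := nonzero_submx_orthogonal e small_supp.
have disj_xw : [disjoint supp e x & supp e w].
  rewrite disjoint_subset; apply/subsetP => j /w_perp.
  by rewrite !inE negbK => ->.
by case: (PR_subspace_disjoint_supp PR_M xM wM disj_xw) => /eqP;
  rewrite ?(negbTE x_neq0) ?(negbTE w_neq0).
Qed.
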